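(* Let $S$ be a finite poset which contains a subposet (with induced order) isomorphic to $V$ but no subposet isomorphic to $W^4$. Then $C(f_S)\ne\varnothing$.
   Context: $f_S(x)=\sum_i x_i^2+\sum_{s_i<s_j}x_ix_j$. $H_n=\{x:\sum x_i=0\}$; $C(f)$ is the set of $h\in H_n\setminus\{0\}$ with either all $\partial f/\partial x_i(h)\le0$ or all $\ge0$. $V=\{h^-,h_1,h_2,h^+\}$ with $h^-<h_1<h^+$, $h^-<h_2<h^+$, $h_1,h_2$ incomparable. $W^4=\{a_1,a_2,b_1,b_2\}$ with only strict relations $a_1<b_1$, $a_1<b_2$, $a_2<b_1$, $a_2<b_2$. *)

From HB Require Import structures.
From mathcomp Require Import all_boot all_order all_algebra.
From mathcomp Require Import reals.
Set Implicit Arguments. Unset Strict Implicit. Unset Printing Implicit Defensive.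
Import Order.TTheory GRing.Theory Num.Theory.
Local Open Scope ring_scope.

Section PosetForm.
Variables (R : realType) (d : Order.disp_t) (S : finPOrderType d).

Definition fS (x : S -> R) : R :=
  \sum_(i : S) x i ^+ 2 + \sum_(i : S) \sum_(j : S | (i < j)%O) x i * x j.

(* partial derivative of f_S w.r.t. x_i (explicit, as f_S is quadratic):
   2 x_i + sum over j comparable and distinct from i of x_j *)
Definition dfS (x : S -> R) (i : S) : R :=
  2 * x i + \sum_(j : S | (i < j)%O || (j < i)%O) x j.

Definition inH (h : S -> R) : Prop := \sum_(i : S) h i = 0.

Definition CfS (h : S -> R) : Prop :=
  inH h /\ (exists i, h i != 0) /\
  ((forall i, dfS h i <= 0) \/ (forall i, 0 <= dfS h i)).

End PosetForm.

(* V on 'I_4: 0 = h^-, 1 = h_1, 2 = h_2, 3 = h^+ (strict relations) *)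
Definition Vlt (a b : 'I_4) : bool :=
  [|| (a == 0 :> nat) && (b == 1 :> nat), (a == 0 :> nat) && (b == 2 :> nat),
      (a == 0 :> nat) && (b == 3 :> nat), (a == 1 :> nat) && (b == 3 :> nat)
    | (a == 2 :> nat) && (b == 3 :> nat)].

(* W^4 on 'I_4: 0 = a_1, 1 = a_2, 2 = b_1, 3 = b_2 (strict relations) *)
Definition Wlt (a b : 'I_4) : bool :=
  ((a == 0 :> nat) || (a == 1 :> nat)) && ((b == 2 :> nat) || (b == 3 :> nat)).

Definition has_subposet d (S : finPOrderType d) (P : rel 'I_4) : Prop :=
  exists g : 'I_4 -> S, injective g /\ forall a b, (g a < g b)%O = P a b.

From HB Require Import structures.
From mathcomp Require Import all_boot all_order all_algebra.
From mathcomp Require Import reals.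
From mathcomp Require Import ring lra.
Set Implicit Arguments. Unset Strict Implicit. Unset Printing Implicit Defensive.
Import Order.TTheory GRing.Theory Num.Theory.
Local Open Scope ring_scope.

(* The witness is h = e_{h_1} + e_{h_2} - e_{h^-} - e_{h^+}, whose coordinates
   sum to zero; we show that every partial derivative of f_S at h is <= 0.
   At the four points of V this is a direct computation; elsewhere the i-th
   derivative is the number of elements of {h_1, h_2} strictly comparable to i
   minus the number of those of {h^-, h^+}. By transitivity, anything
   comparable to h_1 or h_2 is comparable to h^- or h^+. Anything comparable
   to both h_1 and h_2 lies on the same side of both, as they are
   incomparable, and is then comparable to both h^- and h^+: otherwise it
   would form a copy of W^4 with h^- (or h^+), h_1 and h_2. *)

Section StrictComparability.
Variables (d : Order.disp_t) (S : finPOrderType d).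
Local Open Scope order_scope.

Definition strictly_comparable (x y : S) : bool := (x < y) || (y < x).

Lemma has_subposet_W (a1 a2 b1 b2 : S) :
  a1 >< a2 -> b1 >< b2 ->
  a1 < b1 -> a1 < b2 -> a2 < b1 -> a2 < b2 ->
  has_subposet S Wlt.
Proof.
move=> a12 b12 l11 l12 l21 l22.
have a21 : a2 >< a1 by rewrite comparable_sym.
have b21 : b2 >< b1 by rewrite comparable_sym.
have eqF := (incomparable_eqF a12, incomparable_eqF a21, incomparable_eqF b12,
  incomparable_eqF b21, lt_eqF l11, lt_eqF l12, lt_eqF l21, lt_eqF l22,
  gt_eqF l11, gt_eqF l12, gt_eqF l21, gt_eqF l22).
have ltF := (incomparable_ltF a12, incomparable_ltF a21, incomparable_ltF b12,
  incomparable_ltF b21, lt_gtF l11, lt_gtF l12, lt_gtF l21, lt_gtF l22).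
exists (fun k : 'I_4 => nth a1 [:: a1; a2; b1; b2] k); split.
  move=> [[|[|[|[|k]]]] ?] [[|[|[|[|l]]]] ?] //= /eqP;
  by rewrite ?eqF // => _; apply/val_inj.
by move=> [[|[|[|[|k]]]] ?] [[|[|[|[|l]]]] ?] //=; rewrite /Wlt /= ?ltxx ?ltF.
Qed.

Lemma strictly_comparable_lt x y : x < y -> strictly_comparable x y.
Proof. by rewrite /strictly_comparable => ->. Qed.

Lemma strictly_comparable_gt x y : y < x -> strictly_comparable x y.
Proof. by rewrite /strictly_comparable => ->; rewrite orbT. Qed.

Lemma strictly_comparablexx x : strictly_comparable x x = false.
Proof. by rewrite /strictly_comparable ltxx. Qed.

Lemma incomparable_strictly_comparableF x y :
  x >< y -> strictly_comparable x y = false.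
Proof.
move=> xy; have yx : y >< x by rewrite comparable_sym.
by rewrite /strictly_comparable !incomparable_ltF.
Qed.

Lemma strictly_comparable_between x y z i : x < y -> y < z ->
  strictly_comparable i y -> strictly_comparable i x || strictly_comparable i z.
Proof.
move=> xy yz /orP[iy|yi].
  by rewrite (strictly_comparable_lt (lt_trans iy yz)) orbT.
by rewrite (strictly_comparable_gt (lt_trans xy yi)).
Qed.

(* [m], [l], [r], [p] stand for h^-, h_1, h_2, h^+. *)
Lemma has_subposet_V : has_subposet S Vlt ->
  exists m l r p : S, [/\ m < l, m < r, l < p, r < p & l >< r].
Proof.
move=> [g [ginj gV]].
exists (g (@Ordinal 4 0 isT)), (g (@Ordinal 4 1 isT)), (g (@Ordinal 4 2 isT)),
  (g (@Ordinal 4 3 isT)).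
by rewrite !gV /Order.comparable !le_eqVlt !(inj_eq ginj) !gV.
Qed.

Section NoWAroundV.
Variables (m l r p : S).
Hypotheses (ml : m < l) (mr : m < r) (lp : l < p) (rp : r < p) (lr : l >< r).
Hypothesis noW : ~ has_subposet S Wlt.

Lemma strictly_comparable_both i : i != m -> i != p ->
  strictly_comparable i l -> strictly_comparable i r ->
  strictly_comparable i m && strictly_comparable i p.
Proof.
move=> im ip /orP[il|li] /orP[ir|ri].
- rewrite (strictly_comparable_lt (lt_trans il lp)) andbT /strictly_comparable.
  case: (comparableP i m) im => // im_inc _; case: noW.
  by apply: (has_subposet_W _ lr ml mr il ir); rewrite comparable_sym.
- by move: lr; rewrite comparable_sym (lt_comparable (lt_trans ri il)).
- by move: lr; rewrite (lt_comparable (lt_trans li ir)).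
- rewrite (strictly_comparable_gt (lt_trans ml li)) /strictly_comparable.
  case: (comparableP i p) ip => // ip_inc _; case: noW.
  by apply: (has_subposet_W lr _ lp li rp ri); rewrite comparable_sym.
Qed.

Lemma strictly_comparable_count i : i != m -> i != p ->
  (strictly_comparable i l + strictly_comparable i r <=
   strictly_comparable i m + strictly_comparable i p)%N.
Proof.
move=> im ip.
case cl: (strictly_comparable i l); case cr: (strictly_comparable i r) => //=.
- by have /andP[-> ->] := strictly_comparable_both im ip cl cr.
- by case/orP: (strictly_comparable_between ml lp cl) => ->; rewrite ?addn1.
- by case/orP: (strictly_comparable_between mr rp cr) => ->; rewrite ?addn1.
Qed.

End NoWAroundV.

End StrictComparability.

Section IndicatorVectors.
Variables (R : realType) (d : Order.disp_t) (S : finPOrderType d).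

Definition indic (a x : S) : R := (x == a)%:R.

Lemma sum_indic (P : pred S) a : \sum_(x | P x) indic a x = (P a)%:R.
Proof.
rewrite big_mkcond (bigD1 a) //= /indic eqxx big1 ?addr0; first by case: (P a).
by move=> x /negbTE ->; case: (P x).
Qed.

Lemma dfSD (x y : S -> R) i : dfS (x \+ y) i = dfS x i + dfS y i.
Proof. by rewrite /dfS big_split /=; ring. Qed.

Lemma dfSB (x y : S -> R) i : dfS (x \- y) i = dfS x i - dfS y i.
Proof. by rewrite /dfS sumrB /=; ring. Qed.

Lemma dfS_indic a i :
  dfS (indic a) i = 2 * (i == a)%:R + (strictly_comparable i a)%:R.
Proof. by rewrite /dfS sum_indic. Qed.

End IndicatorVectors.

Arguments indic {R d S} a x.

Section VWitness.
Variables (R : realType) (d : Order.disp_t) (S : finPOrderType d) (m l r p : S).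
Hypotheses (ml : (m < l)%O) (mr : (m < r)%O) (lp : (l < p)%O) (rp : (r < p)%O).
Hypothesis lr : (l >< r)%O.

Definition V_witness : S -> R := indic l \+ indic r \- (indic m \+ indic p).

Lemma V_witness_inH : inH V_witness.
Proof. by rewrite /inH sumrB !big_split /= !sum_indic subrr. Qed.

Lemma V_witness_l : V_witness l = 1.
Proof.
rewrite /V_witness /indic /= eqxx (incomparable_eqF lr) (gt_eqF ml) (lt_eqF lp).
by rewrite !addr0 subr0.
Qed.

Lemma dfS_V_witness_le0 : ~ has_subposet S Wlt -> forall i, dfS V_witness i <= 0.
Proof.
move=> noW i; rewrite /V_witness dfSB !dfSD !dfS_indic.
have mp := lt_trans ml lp.
have rl : (r >< l)%O by rewrite comparable_sym.
have eqF := (lt_eqF ml, lt_eqF mr, lt_eqF lp, lt_eqF rp, lt_eqF mp, gt_eqF ml,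
  gt_eqF mr, gt_eqF lp, gt_eqF rp, gt_eqF mp, incomparable_eqF lr, incomparable_eqF rl).
have scT := (strictly_comparable_lt ml, strictly_comparable_lt mr,
  strictly_comparable_lt lp, strictly_comparable_lt rp, strictly_comparable_lt mp,
  strictly_comparable_gt ml, strictly_comparable_gt mr, strictly_comparable_gt lp,
  strictly_comparable_gt rp, strictly_comparable_gt mp,
  incomparable_strictly_comparableF lr, incomparable_strictly_comparableF rl).
case: (eqVneq i m) => [->|im]; first by rewrite strictly_comparablexx ?eqF ?scT /=; lra.
case: (eqVneq i p) => [->|ip]; first by rewrite strictly_comparablexx ?eqF ?scT /=; lra.
case: (eqVneq i l) => [->|il]; first by rewrite strictly_comparablexx ?eqF ?scT /=; lra.
case: (eqVneq i r) => [->|ir]; first by rewrite strictly_comparablexx ?eqF ?scT /=; lra.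
rewrite mulr0 !add0r subr_le0 -!natrD ler_nat.
exact: strictly_comparable_count.
Qed.

End VWitness.

Theorem lemma9 (R : realType) (d : Order.disp_t) (S : finPOrderType d) :
  has_subposet S Vlt -> ~ has_subposet S Wlt ->
  exists h : S -> R, CfS h.
Proof.
move=> /has_subposet_V [m [l [r [p [ml mr lp rp lr]]]]] noW.
exists (V_witness R m l r p); split; [exact: V_witness_inH|split].
  by exists l; rewrite (V_witness_l _ ml lp lr) oner_neq0.
by left; exact: dfS_V_witness_le0.
Qed.
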